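(* For every graph $G$ and every integer $m\ge 1$, the super subdivision of $G$ (obtained by replacing every edge of $G$ by a complete bipartite graph $K_{2,m}$) admits a uniform WIASI.
   Context: All graphs are finite, simple and without isolated vertices. $\mathbb{N}_0$ denotes the set of non-negative integers; for finite $A,B\subseteq\mathbb{N}_0$, $A+B=\{a+b: a\in A, b\in B\}$. An integer additive set-indexer (IASI) of a graph $G$ is an injective map $f$ from $V(G)$ to the finite non-empty subsets of $\mathbb{N}_0$ such that the induced edge map $f^+(uv)=f(u)+f(v)$ is injective on $E(G)$. A weak IASI (WIASI) is an IASI $f$ with $|f^+(uv)|=\max(|f(u)|,|f(v)|)$ for every edge $uv$. For an integer $k\ge 2$, a WIASI $f$ is $k$-uniform if $|f^+(e)|=k$ for every edge $e$; $G$ admits a uniform WIASI (UWIASI) if it admits a $k$-uniform WIASI for some integer $k\ge 2$. In the super subdivision, each edge $uv$ of $G$ is replaced by $m$ new vertices $x_1,\dots,x_m$, each adjacent to both $u$ and $v$ (the edge $uv$ itself being removed), so that $u,v$ form the part of size $2$ of a $K_{2,m}$. *)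

From mathcomp Require Import all_boot.
Set Implicit Arguments. Unset Strict Implicit. Unset Printing Implicit Defensive.

(* A finite subset of N_0 is represented canonically by its strictly
   increasing list of elements; it is non-empty iff the list is non-empty. *)
Definition is_natset (s : seq nat) : bool := sorted ltn s && (s != [::]).

Definition sumset (A B : seq nat) : seq nat :=
  sort leq (undup [seq a + b | a <- A, b <- B]).

(* A graph is given by a vertex type V and an adjacency relation adj
   (an edge uv is the unordered pair {u,v} with adj u v). *)

Definition IASI (V : Type) (adj : rel V) (f : V -> seq nat) : Prop :=
  (forall v, is_natset (f v)) /\
  injective f /\
  (forall u v u' v', adj u v -> adj u' v' ->
     sumset (f u) (f v) = sumset (f u') (f v') ->
     (u = u' /\ v = v') \/ (u = v' /\ v = u')).

Definition WIASI (V : Type) (adj : rel V) (f : V -> seq nat) : Prop :=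
  IASI adj f /\
  (forall u v, adj u v ->
     size (sumset (f u) (f v)) = maxn (size (f u)) (size (f v))).

Definition k_uniform_WIASI (V : Type) (adj : rel V) (k : nat) (f : V -> seq nat) : Prop :=
  WIASI adj f /\ (forall u v, adj u v -> size (sumset (f u) (f v)) = k).

Definition admits_UWIASI (V : Type) (adj : rel V) : Prop :=
  exists k, 2 <= k /\ exists f : V -> seq nat, k_uniform_WIASI adj k f.

Definition simple_graph_no_isolated (T : finType) (e : rel T) : Prop :=
  symmetric e /\ irreflexive e /\ (forall x, exists y, e x y).

(* Super subdivision with parameter m: vertices are the old vertices (inl u)
   and, for every edge A = {u,v} of G and i < m, a new vertex inr (A, i). *)
Definition ss_valid (T : finType) (e : rel T) (m : nat)
    (x : T + ({set T} * 'I_m)) : bool :=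
  match x with
  | inl _ => true
  | inr (A, _) => [exists u, exists v, e u v && (A == [set u; v])]
  end.

Definition ss_vertex (T : finType) (e : rel T) (m : nat) : Type :=
  {x : T + ({set T} * 'I_m) | ss_valid e x}.

Definition ss_adj_raw (T : finType) (m : nat)
    (x y : T + ({set T} * 'I_m)) : bool :=
  match x, y with
  | inl u, inr (A, _) => u \in A
  | inr (A, _), inl u => u \in A
  | _, _ => false
  end.

Definition ss_adj (T : finType) (e : rel T) (m : nat) : rel (ss_vertex e m) :=
  fun x y => ss_adj_raw (val x) (val y).

From mathcomp Require Import all_boot.
Set Implicit Arguments. Unset Strict Implicit. Unset Printing Implicit Defensive.

(* The super subdivision is bipartite: every edge joins an old vertex u to a
   new vertex w. Label u by the singleton {r u} with r u < n, and w by the pair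
   {n c w, n c w + 1} with c injective. The edge uw then gets the set
   {s, s + 1} with s = r u + n c w, so every edge set has two elements, and
   s determines (r u, c w), hence the edge, by Euclidean division by n. *)

Lemma sumsetC (A B : seq nat) : sumset A B = sumset B A.
Proof.
apply/perm_sortP; [exact: leq_total | exact: leq_trans | exact: anti_leq |].
apply: uniq_perm; rewrite ?undup_uniq // => s; rewrite !mem_undup.
by apply/allpairsP/allpairsP => -[[a b] /= [Ha Hb ->]]; exists (b, a); rewrite addnC.
Qed.

Lemma sumset1 (a : nat) (B : seq nat) :
  sorted ltn B -> sumset [:: a] B = [seq a + b | b <- B].
Proof.
move=> sB; have saB : sorted ltn [seq a + b | b <- B].
  by rewrite sorted_map; apply: sub_sorted sB => x y; rewrite /relpre /= ltn_add2l.
move: (saB); rewrite ltn_sorted_uniq_leq => /andP [uB lB].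
by rewrite /sumset /= cats0 undup_id // sorted_sort //; exact: leq_trans.
Qed.

Lemma sumset1_pair (a c : nat) : sumset [:: a] [:: c; c.+1] = [:: a + c; (a + c).+1].
Proof. by rewrite sumset1 /= ?ltnSn // addnS. Qed.

Lemma addn_mul_inj (n r c r' c' : nat) :
  r < n -> r' < n -> r + n * c = r' + n * c' -> r = r' /\ c = c'.
Proof.
move=> lt_r lt_r' E.
have n_gt0 : 0 < n by apply: leq_ltn_trans lt_r.
have := congr1 (modn^~ n) E; have := congr1 (divn^~ n) E.
rewrite /= ![n * _]mulnC ![_ + _ * n]addnC !divnMDl // !modnMDl.
by rewrite !divn_small // !modn_small // !addn0 => -> ->.
Qed.

Section BipartiteLabelling.

Variables (V : Type) (adj : rel V) (n : nat) (part : V -> nat + nat).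

(* [part x = inl r] marks a vertex of the first side with digit [r],
   [part x = inr c] a vertex of the second side with code [c]. *)
Definition joins (x y : V) (r c : nat) : Prop :=
  (part x = inl r /\ part y = inr c) \/ (part x = inr c /\ part y = inl r).

Hypotheses (n_gt0 : 0 < n) (part_inj : injective part)
  (digit_lt : forall x r, part x = inl r -> r < n)
  (adj_joins : forall x y, adj x y -> exists r c, joins x y r c).

Definition interval_label (p : nat + nat) : seq nat :=
  match p with inl r => [:: r] | inr c => [:: n * c; (n * c).+1] end.

Definition label (x : V) : seq nat := interval_label (part x).

Lemma interval_label_inj : injective interval_label.
Proof.
case=> [r|c] [r'|c'] //= [] // E.
- by rewrite E.
- by move/eqP: E; rewrite eqn_mul2l gtn_eqF // => /eqP ->.
Qed.

Lemma sumset_label_joins x y r c : joins x y r c ->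
  sumset (label x) (label y) = [:: r + n * c; (r + n * c).+1].
Proof.
by rewrite /label => -[[-> ->] | [-> ->]] /=; rewrite ?(sumsetC [:: _; _]) sumset1_pair.
Qed.

Lemma joins_inj x y x' y' r c r' c' :
  joins x y r c -> joins x' y' r' c' -> r + n * c = r' + n * c' ->
  (x = x' /\ y = y') \/ (x = y' /\ y = x').
Proof.
move=> Jxy Jxy' E; have [r_lt r'_lt] : r < n /\ r' < n.
  by case: Jxy => -[Px Py]; case: Jxy' => -[Px' Py']; split; apply: digit_lt; eauto.
move: Jxy'; have [<- <-] := addn_mul_inj r_lt r'_lt E => Jxy'.
case: Jxy => -[Px Py]; case: Jxy' => -[Px' Py']; [left | right | right | left];
  by split; apply: part_inj; congruence.
Qed.

Lemma label_uniform_WIASI : k_uniform_WIASI adj 2 label.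
Proof.
have size_edge x y : adj x y -> size (sumset (label x) (label y)) = 2.
  by case/adj_joins => r [c /sumset_label_joins ->].
split=> //; split; last first.
  move=> x y xy; rewrite size_edge //.
  by case/adj_joins: xy => r [c [[Px Py] | [Px Py]]]; rewrite /label Px Py.
split; [|split].
- by rewrite /label => x; case: (part x) => //= c; rewrite /is_natset /= ltnSn.
- by move=> x y /interval_label_inj /part_inj.
- move=> x y x' y' /adj_joins[r [c Jxy]] /adj_joins[r' [c' Jxy']].
  rewrite (sumset_label_joins Jxy) (sumset_label_joins Jxy') => -[E _].
  exact: joins_inj Jxy Jxy' E.
Qed.

End BipartiteLabelling.

Definition ss_part (T : finType) (e : rel T) (m : nat) (x : ss_vertex e m) : nat + nat :=
  match val x with inl u => inl (enum_rank u : nat) | inr _ => inr (pickle (val x)) end.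

Lemma ss_part_inj (T : finType) (e : rel T) (m : nat) : injective (@ss_part T e m).
Proof.
move=> [[u|p] Hx] [[v|q] Hy] // E; apply: val_inj => /=.
- by case: E => /ord_inj/enum_rank_inj ->.
- apply: (pcan_inj (@pickleK _)).
  exact: (congr1 (fun s : nat + nat => if s is inr k then k else 0) E).
Qed.

Theorem mainTheorem16 (T : finType) (e : rel T) (m : nat) :
  simple_graph_no_isolated e -> 1 <= m ->
  admits_UWIASI (@ss_adj T e m).
Proof.
(* the base [#|T|.+1] rather than [#|T|] keeps it positive when [T] is empty *)
move=> _ _; exists 2; split => //; exists (label #|T|.+1 (@ss_part T e m)).
apply: label_uniform_WIASI => //; first exact: ss_part_inj.
- move=> [[u|p] Hx] r //= [<-]; exact: ltnW (ltn_ord _).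
- move=> [[u|[A i]] Hx] [[v|[B j]] Hy] //= _.
  + by exists (enum_rank u), (pickle (inr (B, j) : T + _)); left.
  + by exists (enum_rank v), (pickle (inr (A, i) : T + _)); right.
Qed.
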